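(* Assume (C) and (I). Fix $i\in S$ and $Q,Q^*\in\mathcal Q$. Then, as $\varepsilon\downarrow0$, $$F(i,Q\otimes_\varepsilon Q^* )=F_\varepsilon(i,Q^* )+\big[f(0,i,Q_i)+F_\varepsilon(Q^* )\cdot Q_i\big]\varepsilon+o(\varepsilon).$$ Suppose in addition that condition (H) holds. Then, as $\varepsilon\downarrow0$, $$F(i,Q^* )-F(i,Q\otimes_\varepsilon Q^* )=\big(\Gamma^{Q^*}_i(Q^*_i)-\Gamma^{Q^*}_i(Q_i)\big)\varepsilon+o(\varepsilon).$$
   Context: Let $S=\{1,\dots,N\}$, $N\in\mathbb N$. For $i\in S$ let $E_i=\{q=(q_1,\dots,q_N)\in\mathbb R^N: q_j\ge0\text{ for }j\ne i,\ q_i=-\sum_{j\ne i}q_j\}$ and let $D_i\subseteq E_i$ be given. Let $\mathcal Q=\{Q\in\mathbb R^{N\times N}: Q_i\in D_i\ \forall i\in S\}$, where $Q_i$ is the $i$-th row of $Q$ and $q_{ij}$ its entries. For $Q\in\mathcal Q$, $X=(X_t)_{t\ge0}$ is a time-homogeneous continuous-time Markov chain on $S$ with generator $Q$, and $\mathbb E_{i,Q}$ (or $\mathbb E_i$) is the expectation given $X_0=i$. A payoff function $f$ assigns a real number $f(t,i,\mathbf q)$ to each $t\ge0$, $i\in S$, $\mathbf q\in D_i$. Conditions: (C) $t\mapsto f(t,i,\mathbf q)$ is continuous on $[0,\infty)$ for each $i,\mathbf q$; (I) $\int_0^\infty\sup_{i\in S,\mathbf q\in D_i,\|\mathbf q\|\le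 c}|f(t,i,\mathbf q)|\,dt<\infty$ for every $c>0$ (Euclidean norm). Define $F(i,Q)=\mathbb E_{i,Q}[\int_0^\infty f(t,X_t,Q_{X_t})dt]$, $F(Q)=(F(1,Q),\dots,F(N,Q))$, and for $\varepsilon>0$, $F_\varepsilon(i,Q)=\mathbb E_{i,Q}[\int_0^\infty f(t+\varepsilon,X_t,Q_{X_t})dt]$, $F_\varepsilon(Q)=(F_\varepsilon(1,Q),\dots,F_\varepsilon(N,Q))$. For $Q,Q'\in\mathcal Q$ and $\varepsilon>0$, $Q\otimes_\varepsilon Q'$ means that $X$ evolves with generator $Q$ on $[0,\varepsilon]$ and with generator $Q'$ on $(\varepsilon,\infty)$; $F(i,Q\otimes_\varepsilon Q')=\mathbb E_i[\int_0^\varepsilon f(t,X_t,Q_{X_t})dt+\int_\varepsilon^\infty f(t,X_t,Q'_{X_t})dt]$ with $X_0=i$. For $Q^*\in\mathcal Q$, $i\in S$, $\mathbf q\in D_i$, put $\Gamma^{Q^*}_i(\mathbf q)=f(0,i,\mathbf q)+\mathbf q\cdot F(Q^* )$. Condition (H): there is a nonnegative function $h(t,\varepsilon;i,\mathbf q)$ with $|f(t+\varepsilon,i,\mathbf q)-f(t,i,\mathbf q)|\le h(t,\varepsilon;i,\mathbf q)$ for all $t\ge0,\varepsilon>0,i\in S,\mathbf q\in D_i$, such that $h$ is nondecreasing in $\varepsilon$, $\lim_{\varepsilon\downarrow0}h(t,\varepsilon;i,\mathbf q)=0$, and $\int_0^\infty h(t,\varepsilon;i,\mathbf q)dt<\infty$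 for all sufficiently small $\varepsilon>0$. *)

From Stdlib Require Import Reals Lra Lia List ClassicalEpsilon.
Open Scope R_scope.

(* States S = {1,..,N} are encoded as 0,..,N-1.  Rows / matrices are functions
   nat -> R / nat -> nat -> R; only indices < N are meaningful. *)

Fixpoint sumN (n : nat) (g : nat -> R) : R :=
  match n with O => 0 | S m => sumN m g + g m end.

Definition InE (N i : nat) (q : nat -> R) : Prop :=
  (forall j, (j < N)%nat -> j <> i -> 0 <= q j) /\
  q i = - sumN N (fun j => if Nat.eq_dec j i then 0 else q j).

Definition rnorm (N : nat) (q : nat -> R) : R := sqrt (sumN N (fun j => q j * q j)).

Definition InQ (N : nat) (D : nat -> (nat -> R) -> Prop) (Q : nat -> nat -> R) : Prop :=
  forall i, (i < N)%nat -> D i (Q i).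

(* limit of a real sequence (chosen via classical choice; meaningful when it converges) *)
Definition lim_seq (u : nat -> R) : R := epsilon (inhabits 0) (fun l => Un_cv u l).

Fixpoint Qpow (N : nat) (Q : nat -> nat -> R) (n : nat) : nat -> nat -> R :=
  match n with
  | O => fun i j => if Nat.eq_dec i j then 1 else 0
  | S m => fun i j => sumN N (fun k => Qpow N Q m i k * Q k j)
  end.

Definition Ptrans (N : nat) (Q : nat -> nat -> R) (t : R) (i j : nat) : R :=
  lim_seq (fun m => sum_f_R0 (fun n => t ^ n / INR (Factorial.fact n) * Qpow N Q n i j) m).

(* transition function of the chain with generator Q on [0,eps] and Q' afterwards *)
Definition Pswitch (N : nat) (eps : R) (Q Q' : nat -> nat -> R) (t : R) (i j : nat) : R :=
  if Rle_dec t eps then Ptrans N Q t i j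
  else sumN N (fun k => Ptrans N Q eps i k * Ptrans N Q' (t - eps) k j).

(* Riemann integral as a value (meaningful when g is Riemann integrable on [a,b]) *)
Definition RInt (g : R -> R) (a b : R) : R :=
  epsilon (inhabits 0) (fun l => exists pr : Riemann_integrable g a b, RiemannInt pr = l).

Definition IntInfProp (g : R -> R) (l : R) : Prop :=
  (forall T, 0 <= T -> exists _ : Riemann_integrable g 0 T, True) /\
  (forall e, 0 < e -> exists M, forall T, M <= T -> Rabs (RInt g 0 T - l) < e).

Definition IntInf (g : R -> R) : R := epsilon (inhabits 0) (IntInfProp g).

Section Payoff.
Variables (N : nat) (f : R -> nat -> (nat -> R) -> R).

(* F(i,Q) = E_{i,Q}[ int_0^oo f(t,X_t,Q_{X_t}) dt ] *)
Definition Fval (Q : nat -> nat -> R) (i : nat) : R :=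
  IntInf (fun t => sumN N (fun j => Ptrans N Q t i j * f t j (Q j))).

(* F_eps(i,Q) = E_{i,Q}[ int_0^oo f(t+eps,X_t,Q_{X_t}) dt ] *)
Definition Feps (eps : R) (Q : nat -> nat -> R) (i : nat) : R :=
  IntInf (fun t => sumN N (fun j => Ptrans N Q t i j * f (t + eps) j (Q j))).

Definition Fswitch (eps : R) (Q Q' : nat -> nat -> R) (i : nat) : R :=
  IntInf (fun t => sumN N (fun j =>
     Pswitch N eps Q Q' t i j * f t j (if Rle_dec t eps then Q j else Q' j))).

Definition Gamma (Qs : nat -> nat -> R) (i : nat) (q : nat -> R) : R :=
  f 0 i q + sumN N (fun j => q j * Fval Qs j).
End Payoff.

Definition condC (N : nat) (D : nat -> (nat -> R) -> Prop) (f : R -> nat -> (nat -> R) -> R) : Prop :=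
  forall i q, (i < N)%nat -> D i q ->
  forall t0, 0 <= t0 -> forall e, 0 < e -> exists d, 0 < d /\
    forall t, 0 <= t -> Rabs (t - t0) < d -> Rabs (f t i q - f t0 i q) < e.

Definition maxabs (f : R -> nat -> (nat -> R) -> R) (l : list (nat * (nat -> R))) (t : R) : R :=
  fold_right (fun p acc => Rmax (Rabs (f t (fst p) (snd p))) acc) 0 l.

(* condition (I): int_0^oo sup_{i, q in D_i, |q|<=c} |f(t,i,q)| dt < oo.
   Under (C) the supremum is lower semicontinuous, so its (Lebesgue) integral is the
   supremum of the integrals of maxima over finite subfamilies (monotone convergence). *)
Definition condI (N : nat) (D : nat -> (nat -> R) -> Prop) (f : R -> nat -> (nat -> R) -> R) : Prop :=
  forall c, 0 < c -> exists B,
    forall l, Forall (fun p => (fst p < N)%nat /\ D (fst p) (snd p) /\ rnorm N (snd p) <= c) l ->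
    forall T, 0 <= T -> RInt (maxabs f l) 0 T <= B.

(* "int_0^oo h(t) dt < oo" for a nonnegative function h: the lower integral
   (sup of integrals of Riemann-integrable minorants) is finite. *)
Definition LowerIntFinite (h : R -> R) : Prop :=
  exists B, forall (phi : R -> R) T, 0 <= T ->
    (forall t, 0 <= t <= T -> 0 <= phi t <= h t) ->
    forall pr : Riemann_integrable phi 0 T, RiemannInt pr <= B.

Definition condH (N : nat) (D : nat -> (nat -> R) -> Prop) (f : R -> nat -> (nat -> R) -> R) : Prop :=
  exists h : R -> R -> nat -> (nat -> R) -> R,
    (forall t e i q, 0 <= t -> 0 < e -> (i < N)%nat -> D i q ->
       0 <= h t e i q /\ Rabs (f (t + e) i q - f t i q) <= h t e i q) /\
    (forall t e1 e2 i q, 0 <= t -> 0 < e1 -> e1 <= e2 -> (i < N)%nat -> D i q ->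
       h t e1 i q <= h t e2 i q) /\
    (forall t i q, 0 <= t -> (i < N)%nat -> D i q ->
       forall eta, 0 < eta -> exists d, 0 < d /\
         forall e, 0 < e < d -> Rabs (h t e i q) < eta) /\
    (forall i q, (i < N)%nat -> D i q -> exists e0, 0 < e0 /\
       forall e, 0 < e < e0 -> LowerIntFinite (fun t => h t e i q)).

(* Conditioning on the state of the chain at the switching time [e] (Markov property),
     F(i, Q (x)_e Q') = int_0^e E_i f(t, X_t, Q_(X_t)) dt + sum_k P^Q_e(i, k) F_e(k, Q'),
   where Q' is the generator Q* of the statement.  The integral is e f(0, i, Q_i) + o(e) by
   continuity at 0, and P^Q_e = I + e Q + O(e^2) while F_e(Q') stays bounded thanks to (I);
   this is the first expansion.  The chain Q' (x)_e Q' is just the Q'-chain, so subtracting the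
   first expansion for Q from the one for Q' leaves, up to o(e), the term
   e (Q'_i - Q_i) . (F_e(Q') - F(Q')), which is o(e) because translation is continuous in L^1. *)

From Pilot Require Import Defs.
From Stdlib Require Import Reals Lra Lia List ClassicalEpsilon FunctionalExtensionality.
From Coquelicot Require Import Coquelicot.
Open Scope R_scope.

(** * Finite sums *)

Definition delta (i j : nat) : R := if Nat.eq_dec i j then 1 else 0.

Section FiniteSums.
Implicit Types (n : nat) (g h : nat -> R).

Lemma sumN_ext n g h : (forall j, (j < n)%nat -> g j = h j) -> sumN n g = sumN n h.
Proof.
  induction n as [|n IH]; intros H; simpl; auto.
  rewrite IH, H; auto; intros; apply H; lia.
Qed.

Lemma sumN_0 n : sumN n (fun _ => 0) = 0.
Proof. induction n; simpl; lra. Qed.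

Lemma sumN_plus n g h : sumN n (fun j => g j + h j) = sumN n g + sumN n h.
Proof. induction n; simpl; lra. Qed.

Lemma sumN_minus n g h : sumN n (fun j => g j - h j) = sumN n g - sumN n h.
Proof. induction n; simpl; lra. Qed.

Lemma sumN_scal n c g : sumN n (fun j => c * g j) = c * sumN n g.
Proof. induction n; simpl; [ring | rewrite IHn; ring]. Qed.

Lemma sumN_scalr n c g : sumN n (fun j => g j * c) = sumN n g * c.
Proof. induction n; simpl; [ring | rewrite IHn; ring]. Qed.

Lemma sumN_const n c : sumN n (fun _ => c) = INR n * c.
Proof. induction n; simpl sumN; [simpl; ring | rewrite IHn, S_INR; ring]. Qed.

Lemma sumN_swap n m (g : nat -> nat -> R) :
  sumN n (fun a => sumN m (fun b => g a b)) = sumN m (fun b => sumN n (fun a => g a b)).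
Proof. induction n; simpl; [now rewrite sumN_0 | now rewrite IHn, <- sumN_plus]. Qed.

Lemma sumN_shift n g : sumN (S n) g = g O + sumN n (fun a => g (S a)).
Proof. induction n; simpl in *; [lra | rewrite IHn; lra]. Qed.

Lemma sum_f_R0_sumN g n : sum_f_R0 g n = sumN (S n) g.
Proof. induction n; simpl in *; [lra | rewrite IHn; lra]. Qed.

Lemma sumN_abs n g : Rabs (sumN n g) <= sumN n (fun j => Rabs (g j)).
Proof.
  induction n; simpl; [rewrite Rabs_R0; lra|].
  eapply Rle_trans; [apply Rabs_triang | lra].
Qed.

Lemma sumN_le n g h : (forall j, (j < n)%nat -> g j <= h j) -> sumN n g <= sumN n h.
Proof.
  induction n; simpl; intros H; [lra|].
  apply Rplus_le_compat; [apply IHn; intros|apply H]; auto.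
Qed.

Lemma sumN_nonneg n g : (forall j, (j < n)%nat -> 0 <= g j) -> 0 <= sumN n g.
Proof. intros H. rewrite <- (sumN_0 n). now apply sumN_le. Qed.

Lemma sumN_le_term n g a :
  (a < n)%nat -> (forall b, (b < n)%nat -> 0 <= g b) -> g a <= sumN n g.
Proof.
  induction n; intros Ha Hg; simpl; [lia|].
  destruct (Nat.eq_dec a n) as [->|].
  - assert (0 <= sumN n g) by (apply sumN_nonneg; auto). lra.
  - assert (g a <= sumN n g) by (apply IHn; auto; lia). assert (0 <= g n) by auto. lra.
Qed.

Lemma sumN_delta_l n k g : (k < n)%nat -> sumN n (fun j => delta k j * g j) = g k.
Proof.
  unfold delta; induction n; intros H; simpl; [lia|].
  destruct (Nat.eq_dec k n) as [->|].
  - rewrite (sumN_ext _ _ (fun _ => 0)), sumN_0; [lra|].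
    intros j Hj; destruct (Nat.eq_dec n j); [lia|lra].
  - rewrite IHn; [lra|lia].
Qed.

Lemma sumN_delta_r n k g : (k < n)%nat -> sumN n (fun j => g j * delta j k) = g k.
Proof.
  intros H. rewrite <- (sumN_delta_l n k g H). apply sumN_ext; intros j _.
  unfold delta; destruct (Nat.eq_dec j k), (Nat.eq_dec k j); subst; try lia; lra.
Qed.

End FiniteSums.

Lemma InE_sum N i q : (i < N)%nat -> InE N i q -> sumN N q = 0.
Proof.
  intros Hi [_ Hqi].
  assert (E : sumN N q = sumN N (fun j => if Nat.eq_dec j i then 0 else q j) + q i).
  { rewrite <- (sumN_delta_r N i q Hi), <- sumN_plus.
    apply sumN_ext; intros j _; unfold delta; destruct (Nat.eq_dec j i); subst; lra. }
  lra.
Qed.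

(** * The matrix exponential *)

Section MatrixPowers.
Variables (N : nat) (M : nat -> nat -> R).

Definition bounded_by (K : R) : Prop :=
  0 <= K /\ forall k j, (k < N)%nat -> (j < N)%nat -> Rabs (M k j) <= K.

Lemma matrix_bounded : exists K, bounded_by K.
Proof.
  exists (sumN N (fun k => sumN N (fun j => Rabs (M k j)))). split.
  - apply sumN_nonneg; intros; apply sumN_nonneg; intros; apply Rabs_pos.
  - intros k j Hk Hj.
    eapply Rle_trans; [|apply (sumN_le_term N _ k Hk)].
    + apply (sumN_le_term N (fun j => Rabs (M k j)) j Hj). intros; apply Rabs_pos.
    + intros; apply sumN_nonneg; intros; apply Rabs_pos.
Qed.

Lemma Qpow_1 i j : (i < N)%nat -> Qpow N M 1 i j = M i j.
Proof. exact (sumN_delta_l N i (fun k => M k j)). Qed.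

Lemma Qpow_add a b i j : (j < N)%nat ->
  Qpow N M (a + b) i j = sumN N (fun k => Qpow N M a i k * Qpow N M b k j).
Proof.
  intros Hj. induction b as [|b IH] in j, Hj |- *.
  - rewrite Nat.add_0_r. exact (eq_sym (sumN_delta_r N j _ Hj)).
  - rewrite Nat.add_succ_r. simpl.
    rewrite (sumN_ext _ _ (fun k => sumN N (fun l => Qpow N M a i l * Qpow N M b l k * M k j))).
    2:{ intros k Hk. rewrite IH, <- sumN_scalr by auto. apply sumN_ext; intros; ring. }
    rewrite sumN_swap. apply sumN_ext; intros l _.
    rewrite <- sumN_scal. apply sumN_ext; intros; ring.
Qed.

Lemma Qpow_bound K : bounded_by K ->
  forall n i j, (j < N)%nat -> Rabs (Qpow N M n i j) <= (INR N * K) ^ n.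
Proof.
  intros [HK HM] n. induction n; intros i j Hj; simpl.
  - destruct (Nat.eq_dec i j); rewrite ?Rabs_R1, ?Rabs_R0; lra.
  - eapply Rle_trans; [apply sumN_abs|].
    eapply Rle_trans.
    + apply (sumN_le _ _ (fun _ => (INR N * K) ^ n * K)). intros k Hk.
      rewrite Rabs_mult. apply Rmult_le_compat; auto using Rabs_pos.
    + rewrite sumN_const. right; ring.
Qed.

Lemma Qpow_nonneg : (forall k j, (k < N)%nat -> (j < N)%nat -> 0 <= M k j) ->
  forall n i j, (j < N)%nat -> 0 <= Qpow N M n i j.
Proof.
  intros HM n; induction n; intros i j Hj; simpl.
  - destruct (Nat.eq_dec i j); lra.
  - apply sumN_nonneg; intros k Hk. apply Rmult_le_pos; auto.
Qed.

Lemma Qpow0_rowsum i : (i < N)%nat -> sumN N (fun j => Qpow N M 0 i j) = 1.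
Proof.
  intros Hi. rewrite <- (sumN_delta_l N i (fun _ => 1) Hi).
  apply sumN_ext; intros; now rewrite Rmult_1_r.
Qed.

Lemma QpowS_rowsum : (forall k, (k < N)%nat -> sumN N (M k) = 0) ->
  forall n i, sumN N (fun j => Qpow N M (S n) i j) = 0.
Proof.
  intros HM n i. simpl. rewrite sumN_swap, <- (sumN_0 N).
  apply sumN_ext; intros k Hk. rewrite sumN_scal, HM; auto; ring.
Qed.

End MatrixPowers.

Definition shiftM (M : nat -> nat -> R) (c : R) : nat -> nat -> R :=
  fun a b => M a b + c * delta a b.

Lemma pascal_shift (x : nat -> R) y n :
  sum_f_R0 (fun a => Binomial.C n a * y ^ (n - a) * x (S a)) n
    + y * sum_f_R0 (fun a => Binomial.C n a * y ^ (n - a) * x a) n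
  = sum_f_R0 (fun a => Binomial.C (S n) a * y ^ (S n - a) * x a) (S n).
Proof.
  rewrite !sum_f_R0_sumN.
  assert (E1 : sumN (S n) (fun a => Binomial.C n a * y ^ (n - a) * x (S a)) =
     sumN (S (S n)) (fun a => (match a with O => 0 | S b => Binomial.C n b end) * y ^ (S n - a) * x a)).
  { rewrite (sumN_shift (S n)). cbn beta iota. rewrite !Rmult_0_l, Rplus_0_l.
    apply sumN_ext; intros; f_equal. }
  assert (E2 : y * sumN (S n) (fun a => Binomial.C n a * y ^ (n - a) * x a) =
     sumN (S (S n)) (fun a => (if Nat.leb a n then Binomial.C n a else 0) * y ^ (S n - a) * x a)).
  { rewrite <- sumN_scal. change (sumN (S (S n)) ?g) with (sumN (S n) g + g (S n)). cbv beta.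
    replace (S n <=? n)%nat with false by (symmetry; apply Nat.leb_gt; lia).
    rewrite !Rmult_0_l, Rplus_0_r.
    apply sumN_ext; intros a Ha. rewrite (proj2 (Nat.leb_le a n)) by lia.
    replace (S n - a)%nat with (S (n - a)) by lia. simpl; ring. }
  rewrite E1, E2, <- sumN_plus. apply sumN_ext; intros a Ha.
  rewrite <- !Rmult_plus_distr_r. do 2 f_equal.
  destruct a as [|b].
  - simpl. rewrite !Rplus_0_l. unfold Binomial.C. rewrite !Nat.sub_0_r.
    field; repeat split; apply INR_fact_neq_0.
  - destruct (Nat.leb (S b) n) eqn:Hb.
    + apply Nat.leb_le in Hb. apply pascal. lia.
    + apply Nat.leb_gt in Hb. replace b with n by lia. rewrite Rplus_0_r.
      unfold Binomial.C. rewrite !Nat.sub_diag. field; repeat split; apply INR_fact_neq_0.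
Qed.

(* [M ^ n = ((M + c I) - c I) ^ n] expanded by the binomial theorem, the two terms commuting. *)
Lemma Qpow_binom N M c n i j : (j < N)%nat ->
  Qpow N M n i j
  = sum_f_R0 (fun a => Binomial.C n a * (- c) ^ (n - a) * Qpow N (shiftM M c) a i j) n.
Proof.
  induction n in j |- *; intros Hj.
  - unfold Binomial.C. simpl. field.
  - rewrite <- pascal_shift. simpl Qpow at 1.
    rewrite (sumN_ext _ _ (fun k => Qpow N M n i k * shiftM M c k j
                                   + - c * (Qpow N M n i k * delta k j))).
    2:{ intros; unfold shiftM; ring. }
    rewrite sumN_plus, sumN_scal, sumN_delta_r, <- IHn by auto. f_equal.
    rewrite (sumN_ext _ _ (fun k => sum_f_R0 (fun a => Binomial.C n a * (- c) ^ (n - a)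
               * Qpow N (shiftM M c) a i k * shiftM M c k j) n)).
    2:{ intros k Hk. rewrite IHn, <- scal_sum by auto. ring. }
    erewrite (sumN_ext N); [|intros k _; apply sum_f_R0_sumN].
    rewrite sum_f_R0_sumN, sumN_swap. apply sumN_ext; intros a _. simpl (Qpow N _ (S a) i j).
    rewrite <- sumN_scal. apply sumN_ext; intros; ring.
Qed.

Lemma lim_seq_eq u l : Un_cv u l -> lim_seq u = l.
Proof.
  intros H. unfold lim_seq.
  apply (UL_sequence u); [apply (epsilon_spec (inhabits 0) (Un_cv u)); now exists l | exact H].
Qed.

Lemma exp_is_series x : is_series (fun n => x ^ n / INR (Factorial.fact n)) (exp x).
Proof.
  apply is_series_Reals. unfold exp. destruct (exist_exp x) as [l Hl]. simpl.
  intros e He. destruct (Hl e He) as [n0 Hn0]. exists n0. intros n Hn.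
  rewrite (sum_eq _ (fun k => / INR (Factorial.fact k) * x ^ k)); auto.
  intros; unfold Rdiv; ring.
Qed.

Lemma is_series_eq (a : nat -> R) l1 l2 : is_series a l1 -> is_series a l2 -> l1 = l2.
Proof. intros H1 H2. now rewrite <- (is_series_unique _ _ H1), (is_series_unique _ _ H2). Qed.

Lemma is_series_two_terms (a : nat -> R) : (forall n, a (S (S n)) = 0) -> is_series a (a O + a 1%nat).
Proof.
  intros H. apply is_series_Reals. intros e He. exists 1%nat. intros n Hn.
  replace (sum_f_R0 a n) with (a O + a 1%nat); [unfold Rdist; rewrite Rminus_diag, Rabs_R0; auto|].
  induction n as [|[|n] IH]; [lia | simpl; ring | rewrite tech5, <- IH, H by lia; ring].
Qed.

Lemma is_series_zero : is_series (fun _ => 0) 0.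
Proof.
  pose proof (is_series_two_terms (fun _ => 0) (fun _ => eq_refl)) as H.
  cbv beta in H. now rewrite Rplus_0_r in H.
Qed.

Lemma is_series_sumN n (g : nat -> nat -> R) (l : nat -> R) :
  (forall k, (k < n)%nat -> is_series (g k) (l k)) ->
  is_series (fun m => sumN n (fun k => g k m)) (sumN n l).
Proof.
  induction n; intros H; simpl; [apply is_series_zero|].
  apply (is_series_plus (fun m => sumN n (fun k => g k m)) (g n)); auto.
Qed.

Lemma C_div_fact n a : (a <= n)%nat ->
  Binomial.C n a / INR (Factorial.fact n)
  = / INR (Factorial.fact a) * / INR (Factorial.fact (n - a)).
Proof. intros. unfold Binomial.C. field. repeat split; apply INR_fact_neq_0. Qed.

Lemma inv_fact_pos n : 0 < / INR (Factorial.fact n).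
Proof. apply Rinv_0_lt_compat, INR_fact_lt_0. Qed.

Section MatrixExponential.
Variables (N : nat) (M : nat -> nat -> R).

Definition exp_term (t : R) (n i j : nat) : R := t ^ n / INR (Factorial.fact n) * Qpow N M n i j.

Lemma exp_term_bound K t n i j : bounded_by N M K -> (j < N)%nat ->
  Rabs (exp_term t n i j) <= (Rabs t * (INR N * K)) ^ n / INR (Factorial.fact n).
Proof.
  intros HK Hj. unfold exp_term, Rdiv.
  rewrite !Rabs_mult, Rpow_mult_distr, RPow_abs, (Rabs_right (/ _))
    by (apply Rle_ge, Rlt_le, inv_fact_pos).
  replace (Rabs (t ^ n) * (INR N * K) ^ n * / INR (Factorial.fact n))
    with (Rabs (t ^ n) * / INR (Factorial.fact n) * (INR N * K) ^ n) by ring.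
  apply Rmult_le_compat_l; [|now apply Qpow_bound].
  apply Rmult_le_pos; [apply Rabs_pos | apply Rlt_le, inv_fact_pos].
Qed.

Lemma exp_term_abs_series t i j : (j < N)%nat -> ex_series (fun n => Rabs (exp_term t n i j)).
Proof.
  intros Hj. destruct (matrix_bounded N M) as [K HK].
  apply (@ex_series_le R_AbsRing R_CompleteNormedModule _
           (fun n => (Rabs t * (INR N * K)) ^ n / INR (Factorial.fact n))).
  - intros n. change (norm (Rabs ?x)) with (Rabs (Rabs x)). rewrite Rabs_Rabsolu.
    now apply exp_term_bound.
  - eexists; apply exp_is_series.
Qed.

Lemma Ptrans_series t i j : (j < N)%nat -> is_series (fun n => exp_term t n i j) (Ptrans N M t i j).
Proof.
  intros Hj. assert (Hs := Series_correct _ (ex_series_Rabs _ (exp_term_abs_series t i j Hj))).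
  unfold Ptrans. rewrite (lim_seq_eq _ (Series (fun n => exp_term t n i j))); auto.
  now apply is_series_Reals.
Qed.

(* Cauchy product of the two exponential series, with the binomial theorem for [(s + t) ^ n]. *)
Lemma Ptrans_add s t i j : (j < N)%nat ->
  Ptrans N M (s + t) i j = sumN N (fun k => Ptrans N M s i k * Ptrans N M t k j).
Proof.
  intros Hj. apply (is_series_eq (fun n => exp_term (s + t) n i j)); [now apply Ptrans_series|].
  eapply is_series_ext;
    [|apply (is_series_sumN N (fun k n => sum_f_R0 (fun a => exp_term s a i k * exp_term t (n - a) k j) n))].
  2:{ intros k Hk. apply (is_series_mult (fun a => exp_term s a i k) (fun b => exp_term t b k j));
      auto using Ptrans_series, exp_term_abs_series. }
  intros n. cbv beta.
  erewrite (sumN_ext N); [|intros k _; apply sum_f_R0_sumN]. rewrite sumN_swap.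
  rewrite (sumN_ext (S n) _ (fun a => s ^ a / INR (Factorial.fact a)
             * (t ^ (n - a) / INR (Factorial.fact (n - a))) * Qpow N M n i j)).
  2:{ intros a Ha. unfold exp_term. replace n with (a + (n - a))%nat at 3 by lia.
      rewrite Qpow_add, <- sumN_scal by auto. apply sumN_ext; intros; ring. }
  rewrite sumN_scalr. unfold exp_term. f_equal.
  rewrite binomial. unfold Rdiv. rewrite Rmult_comm, scal_sum, sum_f_R0_sumN.
  apply sumN_ext; intros a Ha.
  replace (Binomial.C n a * s ^ a * t ^ (n - a) * / INR (Factorial.fact n))
    with (Binomial.C n a / INR (Factorial.fact n) * s ^ a * t ^ (n - a)) by (unfold Rdiv; ring).
  rewrite C_div_fact by lia. ring.
Qed.

Lemma Ptrans_0 i j : (j < N)%nat -> Ptrans N M 0 i j = delta i j.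
Proof.
  intros Hj. apply (is_series_eq (fun n => exp_term 0 n i j)); [now apply Ptrans_series|].
  replace (delta i j) with (exp_term 0 0 i j + exp_term 0 1 i j)
    by (unfold exp_term; simpl; unfold delta; destruct Nat.eq_dec; field).
  apply is_series_two_terms. intros n. unfold exp_term. simpl. unfold Rdiv; ring.
Qed.

Lemma Ptrans_rowsum t i : (i < N)%nat -> (forall k, (k < N)%nat -> sumN N (M k) = 0) ->
  sumN N (fun j => Ptrans N M t i j) = 1.
Proof.
  intros Hi HM.
  apply (is_series_eq (fun n => sumN N (fun j => exp_term t n i j))).
  - apply is_series_sumN. intros; now apply Ptrans_series.
  - replace 1 with (sumN N (fun j => exp_term t 0 i j) + sumN N (fun j => exp_term t 1 i j)).
    + apply (is_series_two_terms (fun n => sumN N (fun j => exp_term t n i j))).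
      intros n. unfold exp_term. rewrite sumN_scal, QpowS_rowsum by auto. ring.
    + unfold exp_term. rewrite !sumN_scal, Qpow0_rowsum, QpowS_rowsum by auto. simpl. field.
Qed.

End MatrixExponential.

Definition is_generator (N : nat) (M : nat -> nat -> R) : Prop :=
  (forall k j, (k < N)%nat -> (j < N)%nat -> k <> j -> 0 <= M k j) /\
  (forall k, (k < N)%nat -> sumN N (M k) = 0).

Lemma InQ_generator N D M :
  (forall i q, (i < N)%nat -> D i q -> InE N i q) -> InQ N D M -> is_generator N M.
Proof.
  intros HD HM. split.
  - intros k j Hk Hj Hkj. now apply (HD k (M k) Hk (HM k Hk)).
  - intros k Hk. apply (InE_sum N k); auto.
Qed.

Lemma Ptrans_shiftM N M c t i j : (j < N)%nat ->
  Ptrans N M t i j = Ptrans N (shiftM M c) t i j * exp (- c * t).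
Proof.
  intros Hj. apply (is_series_eq (fun n => exp_term N M t n i j)); [now apply Ptrans_series|].
  eapply is_series_ext; [|apply (is_series_mult (fun a => exp_term N (shiftM M c) t a i j)
                                  (fun b => (- c * t) ^ b / INR (Factorial.fact b)))].
  - intros n. cbv beta. unfold exp_term. rewrite (Qpow_binom N M c), scal_sum, !sum_f_R0_sumN by auto.
    apply sumN_ext; intros a Ha. rewrite Rpow_mult_distr.
    replace (t ^ n) with (t ^ a * t ^ (n - a)) by (rewrite <- pow_add; f_equal; lia).
    transitivity (Binomial.C n a / INR (Factorial.fact n) * (- c) ^ (n - a) * Qpow N (shiftM M c) a i j
                  * (t ^ a * t ^ (n - a))); [|unfold Rdiv; ring].
    rewrite C_div_fact by lia. unfold Rdiv. ring.
  - now apply Ptrans_series.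
  - apply exp_is_series.
  - now apply exp_term_abs_series.
  - eapply ex_series_ext; [|eexists; apply (exp_is_series (Rabs (- c * t)))].
    intros n. unfold Rdiv.
    rewrite (Rabs_mult ((- c * t) ^ n)), RPow_abs, (Rabs_right (/ _)); auto using Rle_ge, Rlt_le, inv_fact_pos.
Qed.

(* [M + K I] is entrywise nonnegative, hence so are its powers and its exponential. *)
Lemma Ptrans_nonneg N M t i j : is_generator N M -> 0 <= t -> (j < N)%nat -> 0 <= Ptrans N M t i j.
Proof.
  intros [Hoff _] Ht Hj. destruct (matrix_bounded N M) as [K [HK HM]].
  assert (HA : forall k l, (k < N)%nat -> (l < N)%nat -> 0 <= shiftM M K k l).
  { intros k l Hk Hl. unfold shiftM, delta. destruct (Nat.eq_dec k l) as [<-|Hkl].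
    - specialize (HM k k Hk Hk). pose proof (Rle_abs (- M k k)). rewrite Rabs_Ropp in *. lra.
    - specialize (Hoff k l Hk Hl Hkl). lra. }
  rewrite (Ptrans_shiftM N M K) by auto. apply Rmult_le_pos; [|apply Rlt_le, exp_pos].
  rewrite <- (is_series_unique _ _ is_series_zero), <- (is_series_unique _ _ (Ptrans_series N _ t i j Hj)).
  apply Series_le; [|eexists; now apply Ptrans_series].
  intros n. split; [lra|]. unfold exp_term.
  apply Rmult_le_pos; [|now apply Qpow_nonneg].
  apply Rmult_le_pos; [now apply pow_le | apply Rlt_le, inv_fact_pos].
Qed.

Lemma Ptrans_bounds N M t k j : is_generator N M -> 0 <= t -> (k < N)%nat -> (j < N)%nat ->
  0 <= Ptrans N M t k j <= 1.
Proof.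
  intros HG Ht Hk Hj. split; [now apply Ptrans_nonneg|].
  rewrite <- (Ptrans_rowsum N M t k Hk (proj2 HG)).
  apply (sumN_le_term N (fun j => Ptrans N M t k j)); auto.
  intros; now apply Ptrans_nonneg.
Qed.

Lemma is_series_abs_le (a b : nat -> R) la lb : is_series a la -> is_series b lb ->
  (forall n, Rabs (a n) <= b n) -> Rabs la <= lb.
Proof.
  intros Ha Hb H. rewrite <- (is_series_unique _ _ Ha), <- (is_series_unique _ _ Hb).
  assert (Hab : ex_series (fun n => Rabs (a n))).
  { apply (@ex_series_le R_AbsRing R_CompleteNormedModule _ b); [|eexists; eauto].
    intros n. change (norm (Rabs ?x)) with (Rabs (Rabs x)). now rewrite Rabs_Rabsolu. }
  eapply Rle_trans; [now apply Series_Rabs|].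
  apply Series_le; [|eexists; eauto]. intros n; split; auto using Rabs_pos.
Qed.

(* [P_t - I - t M] is the tail [sum_(n >= 2) t ^ n M ^ n / n!] of the exponential series. *)
Lemma Ptrans_first_order N M K t i j : bounded_by N M K -> (i < N)%nat -> (j < N)%nat -> 0 <= t <= 1 ->
  Rabs (Ptrans N M t i j - delta i j - t * M i j) <= t ^ 2 * exp (INR N * K).
Proof.
  intros HK Hi Hj Ht.
  set (r n := match n with O => delta i j | 1%nat => t * M i j | _ => 0 end).
  assert (Hr : is_series r (delta i j + t * M i j)) by now apply (is_series_two_terms r).
  assert (HNK : 0 <= INR N * K) by (apply Rmult_le_pos; [apply pos_INR | apply HK]).
  replace (Ptrans N M t i j - delta i j - t * M i j) with (Ptrans N M t i j - (delta i j + t * M i j)) by ring.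
  eapply is_series_abs_le;
    [apply (is_series_minus _ _ _ _ (Ptrans_series N M t i j Hj) Hr)
    |apply (is_series_scal_l (t ^ 2) _ _ (exp_is_series (INR N * K)))|].
  intros n.
  change (Rabs (exp_term N M t n i j - r n) <= t ^ 2 * ((INR N * K) ^ n / INR (Factorial.fact n))).
  assert (Hterm : 0 <= (INR N * K) ^ n / INR (Factorial.fact n))
    by (apply Rmult_le_pos; [now apply pow_le | apply Rlt_le, inv_fact_pos]).
  assert (0 <= t ^ 2) by (apply pow_le; lra).
  destruct n as [|[|n]]; simpl r.
  - replace (exp_term N M t 0 i j) with (delta i j) by (unfold exp_term, delta; simpl; field).
    unfold Rminus; rewrite Rplus_opp_r, Rabs_R0. now apply Rmult_le_pos.
  - replace (exp_term N M t 1 i j) with (t * M i j)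
      by (unfold exp_term; rewrite Qpow_1 by auto; simpl; field).
    unfold Rminus; rewrite Rplus_opp_r, Rabs_R0. now apply Rmult_le_pos.
  - rewrite Rminus_0_r. eapply Rle_trans; [apply (exp_term_bound N M K); auto|].
    rewrite Rabs_right, Rpow_mult_distr by lra.
    assert (t ^ n <= 1) by (rewrite <- (pow1 n); apply pow_incr; lra).
    replace (t ^ S (S n)) with (t ^ 2 * t ^ n) by (simpl; ring).
    unfold Rdiv in *. rewrite Rmult_assoc, Rmult_assoc.
    apply Rmult_le_compat_l; auto.
    rewrite <- (Rmult_1_l ((INR N * K) ^ S (S n) * / INR (Factorial.fact (S (S n))))) at 2.
    apply Rmult_le_compat_r; auto.
Qed.

Lemma Ptrans_lipschitz N M K t h i j : is_generator N M -> bounded_by N M K ->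
  (i < N)%nat -> (j < N)%nat -> 0 <= t -> 0 <= h <= 1 ->
  Rabs (Ptrans N M (t + h) i j - Ptrans N M t i j) <= (K + exp (INR N * K)) * h.
Proof.
  intros HG HK Hi Hj Ht Hh.
  rewrite Ptrans_add, <- (sumN_delta_r N j (fun k => Ptrans N M t i k)), <- sumN_minus by auto.
  eapply Rle_trans; [apply sumN_abs|].
  eapply Rle_trans; [apply (sumN_le _ _ (fun k => Ptrans N M t i k * ((K + exp (INR N * K)) * h)))|].
  - intros k Hk. rewrite <- Rmult_minus_distr_l, Rabs_mult, Rabs_right by (now apply Rle_ge, Ptrans_nonneg).
    apply Rmult_le_compat_l; [now apply Ptrans_nonneg|].
    assert (Hfo := Ptrans_first_order N M K h k j HK Hk Hj Hh).
    assert (Rabs (h * M k j) <= h * K)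
      by (rewrite Rabs_mult, Rabs_right by lra; apply Rmult_le_compat_l; [lra | apply HK; auto]).
    assert (h ^ 2 * exp (INR N * K) <= h * exp (INR N * K))
      by (apply Rmult_le_compat_r; [apply Rlt_le, exp_pos | simpl; nra]).
    pose proof (Rabs_triang (Ptrans N M h k j - delta k j - h * M k j) (h * M k j)).
    replace (Ptrans N M h k j - delta k j - h * M k j + h * M k j)
      with (Ptrans N M h k j - delta k j) in * by ring.
    lra.
  - rewrite sumN_scalr, Ptrans_rowsum by (auto; apply HG). lra.
Qed.

(** * Continuity on [[0, +oo)] *)

Definition cont_nonneg (g : R -> R) : Prop :=
  forall t0, 0 <= t0 -> forall e, 0 < e -> exists d, 0 < d /\
    forall t, 0 <= t -> Rabs (t - t0) < d -> Rabs (g t - g t0) < e.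

Lemma cont_nonneg_continuous g : cont_nonneg g <-> forall z, continuous (fun t => g (Rmax 0 t)) z.
Proof.
  split.
  - intros Hg z. apply continuity_pt_filterlim. intros e He.
    destruct (Hg (Rmax 0 z) (Rmax_l 0 z) e He) as [d [Hd H]].
    exists d; split; auto. intros x [_ Hx]. apply H; [apply Rmax_l|].
    eapply Rle_lt_trans; [|exact Hx]. simpl; unfold R_dist.
    unfold Rmax; destruct (Rle_dec 0 x), (Rle_dec 0 z); unfold Rabs; repeat destruct Rcase_abs; lra.
  - intros Hg t0 Ht0 e He.
    destruct (proj2 (continuity_pt_filterlim _ t0) (Hg t0) e He) as [d [Hd H]].
    exists d; split; auto. intros t Ht Htd.
    destruct (Req_dec t t0) as [->|Hne]; [rewrite Rminus_diag, Rabs_R0; lra|].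
    specialize (H t (conj (conj I (not_eq_sym Hne)) Htd)). simpl in H; unfold R_dist in H.
    now rewrite !Rmax_right in H.
Qed.

Lemma cont_nonneg_const c : cont_nonneg (fun _ => c).
Proof. apply cont_nonneg_continuous. intros; apply continuous_const. Qed.

Lemma cont_nonneg_plus g h : cont_nonneg g -> cont_nonneg h -> cont_nonneg (fun t => g t + h t).
Proof. rewrite !cont_nonneg_continuous. intros Hg Hh z. exact (continuous_plus _ _ z (Hg z) (Hh z)). Qed.

Lemma cont_nonneg_minus g h : cont_nonneg g -> cont_nonneg h -> cont_nonneg (fun t => g t - h t).
Proof. rewrite !cont_nonneg_continuous. intros Hg Hh z. exact (continuous_minus _ _ z (Hg z) (Hh z)). Qed.

Lemma cont_nonneg_mult g h : cont_nonneg g -> cont_nonneg h -> cont_nonneg (fun t => g t * h t).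
Proof. rewrite !cont_nonneg_continuous. intros Hg Hh z. exact (continuous_mult _ _ z (Hg z) (Hh z)). Qed.

Lemma cont_nonneg_abs g : cont_nonneg g -> cont_nonneg (fun t => Rabs (g t)).
Proof. rewrite !cont_nonneg_continuous. intros Hg z. exact (continuous_Rabs_comp _ z (Hg z)). Qed.

Lemma cont_nonneg_Rmax g h : cont_nonneg g -> cont_nonneg h -> cont_nonneg (fun t => Rmax (g t) (h t)).
Proof.
  intros Hg Hh.
  assert (E : forall a b, Rmax a b = (a + b + Rabs (a - b)) * / 2)
    by (intros; unfold Rmax, Rabs; destruct Rle_dec, Rcase_abs; lra).
  apply cont_nonneg_continuous. intros z. eapply continuous_ext; [intros; symmetry; apply E|].
  apply (continuous_mult (fun t => _ + _ + _) (fun _ => / 2)); [|apply continuous_const].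
  revert z. apply (proj1 (cont_nonneg_continuous (fun t => g t + h t + Rabs (g t - h t)))).
  apply cont_nonneg_plus; [now apply cont_nonneg_plus | now apply cont_nonneg_abs, cont_nonneg_minus].
Qed.

Lemma cont_nonneg_sumN n (g : nat -> R -> R) : (forall j, (j < n)%nat -> cont_nonneg (g j)) ->
  cont_nonneg (fun t => sumN n (fun j => g j t)).
Proof.
  induction n; intros H; simpl; [apply cont_nonneg_const|].
  apply (cont_nonneg_plus (fun t => sumN n (fun j => g j t)) (g n)); auto.
Qed.

Lemma cont_nonneg_shift g s : 0 <= s -> cont_nonneg g -> cont_nonneg (fun t => g (t + s)).
Proof.
  intros Hs Hg t0 Ht0 e He. destruct (Hg (t0 + s)) with (e := e) as [d [Hd H]]; [lra|auto|].
  exists d; split; auto. intros t Ht Htd. apply H; [lra|]. now replace (t + s - (t0 + s)) with (t - t0) by ring.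
Qed.

Lemma cont_nonneg_lipschitz g L : 0 <= L ->
  (forall t h, 0 <= t -> 0 <= h <= 1 -> Rabs (g (t + h) - g t) <= L * h) -> cont_nonneg g.
Proof.
  intros HL H t0 Ht0 e He. exists (Rmin 1 (e / (L + 1))).
  assert (Hd : 0 < e / (L + 1)) by (apply Rdiv_lt_0_compat; lra).
  split; [apply Rmin_pos; lra|].
  intros t Ht Htd. pose proof (Rmin_l 1 (e / (L + 1))). pose proof (Rmin_r 1 (e / (L + 1))).
  assert (HLe : L * (e / (L + 1)) < e)
    by (replace (L * (e / (L + 1))) with (e - e / (L + 1)) by (field; lra); lra).
  assert (Hdist : Rabs (t - t0) <= 1 /\ L * Rabs (t - t0) < e).
  { split; [lra|]. apply (Rle_lt_trans _ (L * (e / (L + 1)))); [apply Rmult_le_compat_l|]; lra. }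
  destruct (Rle_dec t0 t).
  - specialize (H t0 (t - t0)). replace (t0 + (t - t0)) with t in H by ring.
    rewrite Rabs_right in * by lra. apply (Rle_lt_trans _ _ _ (H Ht0 ltac:(lra))). lra.
  - specialize (H t (t0 - t)). replace (t + (t0 - t)) with t0 in H by ring.
    rewrite Rabs_left in Hdist by lra. rewrite Rabs_minus_sym.
    apply (Rle_lt_trans _ _ _ (H Ht ltac:(lra))). lra.
Qed.

Lemma Ptrans_cont N M k j : is_generator N M -> (k < N)%nat -> (j < N)%nat ->
  cont_nonneg (fun t => Ptrans N M t k j).
Proof.
  intros HG Hk Hj. destruct (matrix_bounded N M) as [K HK].
  apply (cont_nonneg_lipschitz _ (K + exp (INR N * K))); [pose proof (exp_pos (INR N * K)); destruct HK; lra|].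
  intros t h Ht Hh. now apply Ptrans_lipschitz.
Qed.

(** * Integrals on [[0, +oo)] *)

Section RealIntegrals.
Implicit Types (g h : R -> R).

Lemma RInt_plus_R g h a b : ex_RInt g a b -> ex_RInt h a b ->
  RInt (fun x => g x + h x) a b = RInt g a b + RInt h a b.
Proof. exact (RInt_plus g h a b). Qed.

Lemma RInt_minus_R g h a b : ex_RInt g a b -> ex_RInt h a b ->
  RInt (fun x => g x - h x) a b = RInt g a b - RInt h a b.
Proof. exact (RInt_minus g h a b). Qed.

Lemma RInt_scal_R g a b c : ex_RInt g a b -> RInt (fun x => c * g x) a b = c * RInt g a b.
Proof. exact (RInt_scal g a b c). Qed.

Lemma RInt_Chasles_R g a b c : ex_RInt g a b -> ex_RInt g b c -> RInt g a b + RInt g b c = RInt g a c.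
Proof. exact (RInt_Chasles g a b c). Qed.

Lemma RInt_const_R a b c : RInt (fun _ => c) a b = (b - a) * c.
Proof. exact (RInt_const a b c). Qed.

Lemma RInt_translate g a b s : ex_RInt g (a + s) (b + s) ->
  ex_RInt (fun t => g (t + s)) a b /\ RInt (fun t => g (t + s)) a b = RInt g (a + s) (b + s).
Proof.
  intros H.
  assert (H1 : ex_RInt g (1 * a + s) (1 * b + s)) by now rewrite !Rmult_1_l.
  assert (E : forall y, scal 1 (g (1 * y + s)) = g (y + s))
    by (intros y; change (1 * g (1 * y + s) = g (y + s)); now rewrite !Rmult_1_l).
  split.
  - apply (ex_RInt_ext (fun y => scal 1 (g (1 * y + s)))); [intros; apply E|].
    exact (ex_RInt_comp_lin g 1 s a b H1).
  - replace (RInt g (a + s) (b + s)) with (RInt g (1 * a + s) (1 * b + s)) by now rewrite !Rmult_1_l.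
    rewrite <- (RInt_comp_lin g 1 s a b H1). apply RInt_ext; intros; symmetry; apply E.
Qed.

Lemma cont_nonneg_ex_RInt g a b : cont_nonneg g -> 0 <= a -> a <= b -> ex_RInt g a b.
Proof.
  intros Hg Ha Hab. apply (ex_RInt_ext (fun t => g (Rmax 0 t))).
  - intros x Hx. rewrite Rmin_left, Rmax_right in Hx by lra. now rewrite Rmax_right by lra.
  - apply (@ex_RInt_continuous R_CompleteNormedModule). intros; now apply cont_nonneg_continuous.
Qed.

Lemma RInt_Defs_eq g a b : ex_RInt g a b -> Defs.RInt g a b = RInt g a b.
Proof.
  intros H. pose proof (ex_RInt_Reals_0 _ _ _ H) as pr. unfold Defs.RInt.
  destruct (epsilon_spec (inhabits 0) (fun l => exists pr : Riemann_integrable g a b, RiemannInt pr = l))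
    as [pr' <-]; [now exists (RiemannInt pr), pr|].
  symmetry. apply RInt_Reals.
Qed.

Lemma bounded_nondecreasing_limit (F : R -> R) B :
  (forall s t, 0 <= s <= t -> F s <= F t) -> (forall t, 0 <= t -> F t <= B) ->
  exists l, forall e, 0 < e -> exists M, 0 <= M /\ forall T, M <= T -> Rabs (F T - l) < e.
Proof.
  intros Hmono HB.
  set (E x := exists t, 0 <= t /\ x = F t).
  destruct (completeness E) as [l [Hub Hlub]].
  { exists B. intros x [t [Ht ->]]; auto. }
  { exists (F 0), 0; split; [lra|auto]. }
  exists l. intros e He.
  destruct (classic (exists t, 0 <= t /\ l - e < F t)) as [[t0 [Ht0 Hlt]]|Hno].
  - exists t0. split; auto. intros T HT.
    assert (F t0 <= F T) by (apply Hmono; lra).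
    assert (F T <= l) by (apply Hub; exists T; split; [lra|auto]).
    apply Rabs_def1; lra.
  - exfalso. assert (l <= l - e); [|lra]. apply Hlub. intros x [t [Ht ->]].
    destruct (Rle_dec (F t) (l - e)); auto. exfalso; apply Hno; exists t; split; auto; lra.
Qed.

Lemma RInt_nondecreasing g : (forall T, 0 <= T -> ex_RInt g 0 T) -> (forall t, 0 <= t -> 0 <= g t) ->
  forall s t, 0 <= s <= t -> RInt g 0 s <= RInt g 0 t.
Proof.
  intros Hg Hpos s t Hst.
  assert (Hst' : ex_RInt g s t) by (apply (ex_RInt_Chasles_2 g 0); [lra | apply Hg; lra]).
  rewrite <- (RInt_Chasles_R g 0 s t) by (auto; apply Hg; lra).
  assert (0 <= RInt g s t) by (apply RInt_ge_0; auto; [lra | intros; apply Hpos; lra]). lra.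
Qed.

Lemma RInt_sumN n (g : nat -> R -> R) a b : (forall j, (j < n)%nat -> ex_RInt (g j) a b) ->
  ex_RInt (fun t => sumN n (fun j => g j t)) a b /\
  RInt (fun t => sumN n (fun j => g j t)) a b = sumN n (fun j => RInt (g j) a b).
Proof.
  induction n; intros H; simpl.
  - split; [apply ex_RInt_const | rewrite RInt_const_R; ring].
  - destruct IHn as [E1 E2]; [intros; apply H; lia|].
    split; [apply (ex_RInt_plus (fun t => sumN n (fun j => g j t))); auto|].
    rewrite RInt_plus_R, E2; auto.
Qed.

End RealIntegrals.

Definition is_RInt_inf (g : R -> R) (l : R) : Prop :=
  (forall T, 0 <= T -> ex_RInt g 0 T) /\
  (forall e, 0 < e -> exists M, 0 <= M /\ forall T, M <= T -> Rabs (RInt g 0 T - l) < e).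

Lemma IntInfProp_unique (g : R -> R) l1 l2 : IntInfProp g l1 -> IntInfProp g l2 -> l1 = l2.
Proof.
  intros [_ H1] [_ H2]. destruct (Req_dec l1 l2) as [|Hne]; auto. exfalso.
  set (e := Rabs (l1 - l2) / 2).
  assert (He : 0 < e) by (apply Rdiv_lt_0_compat; [apply Rabs_pos_lt; lra | lra]).
  destruct (H1 e He) as [M1 HM1], (H2 e He) as [M2 HM2].
  specialize (HM1 (Rmax M1 M2) (Rmax_l _ _)). specialize (HM2 (Rmax M1 M2) (Rmax_r _ _)).
  set (I := Defs.RInt g 0 (Rmax M1 M2)) in *.
  pose proof (Rabs_triang (l1 - I) (I - l2)) as Htri.
  replace (l1 - I + (I - l2)) with (l1 - l2) in Htri by ring.
  rewrite Rabs_minus_sym in HM1. unfold e in *. lra.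
Qed.

Lemma is_RInt_inf_IntInf (g : R -> R) l : is_RInt_inf g l -> IntInf g = l.
Proof.
  intros [Hex Hlim].
  assert (Hl : IntInfProp g l).
  { split.
    - intros T HT. now exists (ex_RInt_Reals_0 _ _ _ (Hex T HT)).
    - intros e He. destruct (Hlim e He) as [M [HM HT]]. exists M. intros T HMT.
      rewrite RInt_Defs_eq by (apply Hex; lra). auto. }
  apply (IntInfProp_unique g); auto.
  apply (epsilon_spec (inhabits 0) (IntInfProp g)). now exists l.
Qed.

Lemma is_RInt_inf_zero : is_RInt_inf (fun _ => 0) 0.
Proof.
  split; [intros; apply ex_RInt_const|].
  intros e He. exists 0. split; [lra|]. intros T _.
  rewrite RInt_const_R, Rmult_0_r, Rminus_0_r, Rabs_R0. auto.
Qed.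

Lemma is_RInt_inf_dist_le (g1 g2 : R -> R) l1 l2 c : is_RInt_inf g1 l1 -> is_RInt_inf g2 l2 ->
  (forall T, 0 <= T -> Rabs (RInt g1 0 T - RInt g2 0 T) <= c) -> Rabs (l1 - l2) <= c.
Proof.
  intros [_ H1] [_ H2] H. destruct (Rle_dec (Rabs (l1 - l2)) c) as [|Hn]; auto. exfalso.
  set (e := (Rabs (l1 - l2) - c) / 2).
  destruct (H1 e) as [M1 [HM1 HH1]]; [unfold e; lra|].
  destruct (H2 e) as [M2 [HM2 HH2]]; [unfold e; lra|].
  set (T := Rmax M1 M2). assert (HT : 0 <= T) by (eapply Rle_trans; [apply HM1 | apply Rmax_l]).
  specialize (HH1 T (Rmax_l _ _)). specialize (HH2 T (Rmax_r _ _)). specialize (H T HT).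
  pose proof (Rabs_triang (l1 - RInt g1 0 T) (RInt g1 0 T - RInt g2 0 T)) as Ht1.
  pose proof (Rabs_triang (l1 - RInt g1 0 T + (RInt g1 0 T - RInt g2 0 T)) (RInt g2 0 T - l2)) as Ht2.
  replace (l1 - RInt g1 0 T + (RInt g1 0 T - RInt g2 0 T) + (RInt g2 0 T - l2)) with (l1 - l2) in Ht2 by ring.
  rewrite Rabs_minus_sym in HH1. unfold e in *. lra.
Qed.

(* The limit is that of [int_0^T (g + m)] minus that of [int_0^T m], both nondecreasing and bounded. *)
Lemma is_RInt_inf_dominated (g m : R -> R) B :
  (forall T, 0 <= T -> ex_RInt g 0 T) -> (forall T, 0 <= T -> ex_RInt m 0 T) ->
  (forall t, 0 <= t -> Rabs (g t) <= m t) -> (forall T, 0 <= T -> RInt m 0 T <= B) ->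
  exists l, is_RInt_inf g l /\ Rabs l <= B.
Proof.
  intros Hg Hm Hgm HB.
  assert (Hgint : forall T, 0 <= T -> Rabs (RInt g 0 T) <= RInt m 0 T).
  { intros T HT. eapply Rle_trans; [apply abs_RInt_le; auto|].
    apply RInt_le; [auto | apply ex_RInt_norm, Hg | apply Hm | intros; apply Hgm]; lra. }
  assert (Hgm' : forall T, 0 <= T -> ex_RInt (fun t => g t + m t) 0 T)
    by (intros; apply (ex_RInt_plus g m); auto).
  destruct (bounded_nondecreasing_limit (fun T => RInt (fun t => g t + m t) 0 T) (2 * B)) as [l1 H1].
  { apply RInt_nondecreasing; auto. intros t Ht. specialize (Hgm t Ht).
    pose proof (Rle_abs (- g t)). rewrite Rabs_Ropp in *. lra. }
  { intros t Ht. rewrite RInt_plus_R by auto. specialize (Hgint t Ht). specialize (HB t Ht).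
    pose proof (Rle_abs (RInt g 0 t)). lra. }
  destruct (bounded_nondecreasing_limit (fun T => RInt m 0 T) B) as [l2 H2]; auto.
  { apply RInt_nondecreasing; auto. intros t Ht. specialize (Hgm t Ht). pose proof (Rabs_pos (g t)). lra. }
  assert (Hl : is_RInt_inf g (l1 - l2)).
  { split; auto. intros e He.
    destruct (H1 (e / 2)) as [M1 [HM1 HH1]]; [lra|]. destruct (H2 (e / 2)) as [M2 [HM2 HH2]]; [lra|].
    exists (Rmax M1 M2). split; [eapply Rle_trans; [apply HM1 | apply Rmax_l]|]. intros T HT.
    specialize (HH1 T (Rle_trans _ _ _ (Rmax_l _ _) HT)). specialize (HH2 T (Rle_trans _ _ _ (Rmax_r _ _) HT)).
    rewrite RInt_plus_R in HH1 by (apply Hg || apply Hm; pose proof (Rmax_l M1 M2); lra).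
    replace (RInt g 0 T - (l1 - l2)) with ((RInt g 0 T + RInt m 0 T - l1) - (RInt m 0 T - l2)) by ring.
    eapply Rle_lt_trans; [apply Rabs_triang|]. rewrite Rabs_Ropp. lra. }
  exists (l1 - l2). split; auto.
  rewrite <- (Rminus_0_r (l1 - l2)). apply (is_RInt_inf_dist_le _ _ _ _ _ Hl is_RInt_inf_zero).
  intros T HT. rewrite RInt_const_R, Rmult_0_r, Rminus_0_r. eapply Rle_trans; eauto.
Qed.

Lemma is_RInt_inf_plus (g1 g2 : R -> R) l1 l2 : is_RInt_inf g1 l1 -> is_RInt_inf g2 l2 ->
  is_RInt_inf (fun t => g1 t + g2 t) (l1 + l2).
Proof.
  intros [E1 H1] [E2 H2]. split; [intros; apply (ex_RInt_plus g1 g2); auto|].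
  intros e He. destruct (H1 (e / 2)) as [M1 [HM1 HH1]]; [lra|]. destruct (H2 (e / 2)) as [M2 [HM2 HH2]]; [lra|].
  exists (Rmax M1 M2). split; [eapply Rle_trans; [apply HM1 | apply Rmax_l]|]. intros T HT.
  pose proof (Rmax_l M1 M2). pose proof (Rmax_r M1 M2).
  specialize (HH1 T ltac:(lra)). specialize (HH2 T ltac:(lra)).
  rewrite RInt_plus_R by (apply E1 || apply E2; lra).
  replace (RInt g1 0 T + RInt g2 0 T - (l1 + l2)) with ((RInt g1 0 T - l1) + (RInt g2 0 T - l2)) by ring.
  eapply Rle_lt_trans; [apply Rabs_triang | lra].
Qed.

Lemma is_RInt_inf_scal c (g : R -> R) l : is_RInt_inf g l -> is_RInt_inf (fun t => c * g t) (c * l).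
Proof.
  intros [E H]. split; [intros; apply (ex_RInt_scal g); auto|].
  intros e He. pose proof (Rabs_pos c).
  destruct (H (e / (Rabs c + 1))) as [M [HM HH]]; [apply Rdiv_lt_0_compat; lra|].
  exists M. split; auto. intros T HT. specialize (HH T HT).
  rewrite RInt_scal_R, <- Rmult_minus_distr_l, Rabs_mult by (apply E; lra).
  apply (Rle_lt_trans _ (Rabs c * (e / (Rabs c + 1)))); [apply Rmult_le_compat_l; lra|].
  replace (Rabs c * (e / (Rabs c + 1))) with (e - e / (Rabs c + 1)) by (field; lra).
  assert (0 < e / (Rabs c + 1)) by (apply Rdiv_lt_0_compat; lra). lra.
Qed.

Lemma is_RInt_inf_sumN n (c : nat -> R) (g : nat -> R -> R) (l : nat -> R) :
  (forall k, (k < n)%nat -> is_RInt_inf (g k) (l k)) ->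
  is_RInt_inf (fun t => sumN n (fun k => c k * g k t)) (sumN n (fun k => c k * l k)).
Proof.
  induction n; intros H; simpl; [apply is_RInt_inf_zero|].
  apply (is_RInt_inf_plus (fun t => sumN n (fun k => c k * g k t)) (fun t => c n * g n t)).
  - apply IHn; auto.
  - apply is_RInt_inf_scal, H; lia.
Qed.

Lemma is_RInt_inf_split e (chi u w : R -> R) W : 0 < e -> cont_nonneg u -> is_RInt_inf w W ->
  (forall t, 0 <= t <= e -> chi t = u t) -> (forall t, e < t -> chi t = w (t - e)) ->
  is_RInt_inf chi (RInt u 0 e + W).
Proof.
  intros He Hu [Ew Hw] H1 H2.
  assert (Hhead : forall T, 0 <= T <= e -> ex_RInt chi 0 T /\ RInt chi 0 T = RInt u 0 T).
  { intros T HT. assert (Hext : forall x, Rmin 0 T < x < Rmax 0 T -> u x = chi x).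
    { intros x Hx. rewrite Rmin_left, Rmax_right in Hx by lra. symmetry; apply H1; lra. }
    split; [apply (ex_RInt_ext u); auto; apply cont_nonneg_ex_RInt; auto; lra|].
    symmetry; now apply RInt_ext. }
  assert (Htail : forall T, e <= T -> ex_RInt chi e T /\ RInt chi e T = RInt w 0 (T - e)).
  { intros T HT. destruct (RInt_translate w e T (- e)) as [R1 R2].
    { replace (e + - e) with 0 by ring. apply Ew; lra. }
    replace (e + - e) with 0 in R2 by ring. replace (T + - e) with (T - e) in R2 by ring.
    assert (Hext : forall x, Rmin e T < x < Rmax e T -> w (x + - e) = chi x).
    { intros x Hx. rewrite Rmin_left, Rmax_right in Hx by lra. rewrite H2 by lra. f_equal; ring. }
    split; [now apply (ex_RInt_ext _ _ _ _ Hext)|].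
    rewrite <- R2. symmetry. now apply RInt_ext. }
  assert (Hsplit : forall T, e <= T -> RInt chi 0 T = RInt u 0 e + RInt w 0 (T - e)).
  { intros T HT. destruct (Hhead e ltac:(lra)) as [X1 X2]. destruct (Htail T HT) as [X3 X4].
    now rewrite <- (RInt_Chasles_R chi 0 e T), X2, X4. }
  split.
  - intros T HT. destruct (Rle_dec T e); [apply Hhead; lra|].
    apply (ex_RInt_Chasles chi 0 e T); [apply Hhead | apply Htail]; lra.
  - intros eps Heps. destruct (Hw eps Heps) as [M [HM HH]]. exists (M + e). split; [lra|].
    intros T HT. rewrite Hsplit by lra.
    replace (RInt u 0 e + RInt w 0 (T - e) - (RInt u 0 e + W)) with (RInt w 0 (T - e) - W) by ring.
    apply HH. lra.
Qed.

(** * Limits as [e] decreases to [0] *)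

Definition little_o_at_0 (w g : R -> R) : Prop :=
  forall eta, 0 < eta -> exists d, 0 < d /\ forall e, 0 < e < d -> Rabs (g e) <= eta * w e.

Section LittleO.
Variable w : R -> R.
Hypothesis w_nonneg : forall e, 0 < e -> 0 <= w e.
Implicit Types (g h : R -> R).

Lemma little_o_at_0_ext g1 g2 : (forall e, 0 < e -> g1 e = g2 e) ->
  little_o_at_0 w g1 -> little_o_at_0 w g2.
Proof.
  intros E H eta Heta. destruct (H eta Heta) as [d [Hd Hg]].
  exists d. split; auto. intros e He. rewrite <- E by lra. auto.
Qed.

Lemma little_o_at_0_plus g1 g2 : little_o_at_0 w g1 -> little_o_at_0 w g2 ->
  little_o_at_0 w (fun e => g1 e + g2 e).
Proof.
  intros H1 H2 eta Heta.
  destruct (H1 (eta / 2)) as [d1 [Hd1 K1]]; [lra|]. destruct (H2 (eta / 2)) as [d2 [Hd2 K2]]; [lra|].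
  exists (Rmin d1 d2). split; [now apply Rmin_pos|]. intros e He.
  pose proof (Rmin_l d1 d2). pose proof (Rmin_r d1 d2).
  specialize (K1 e ltac:(lra)). specialize (K2 e ltac:(lra)).
  eapply Rle_trans; [apply Rabs_triang | lra].
Qed.

Lemma little_o_at_0_minus g1 g2 : little_o_at_0 w g1 -> little_o_at_0 w g2 ->
  little_o_at_0 w (fun e => g1 e - g2 e).
Proof.
  intros H1 H2. apply (little_o_at_0_plus g1 (fun e => - g2 e)); auto.
  intros eta Heta. destruct (H2 eta Heta) as [d [Hd K]]. exists d. split; auto.
  intros e He. rewrite Rabs_Ropp. auto.
Qed.

Lemma little_o_at_0_sumN n (g : nat -> R -> R) :
  (forall k, (k < n)%nat -> little_o_at_0 w (g k)) -> little_o_at_0 w (fun e => sumN n (fun k => g k e)).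
Proof.
  induction n; intros H; simpl.
  - intros eta Heta. exists 1. split; [lra|]. intros e He.
    rewrite Rabs_R0. apply Rmult_le_pos; [lra | apply w_nonneg; lra].
  - apply (little_o_at_0_plus (fun e => sumN n (fun k => g k e)) (g n)); auto.
Qed.

Lemma little_o_at_0_scal c h : little_o_at_0 w h -> little_o_at_0 w (fun e => c * h e).
Proof.
  intros H eta Heta. pose proof (Rabs_pos c).
  destruct (H (eta / (Rabs c + 1))) as [d [Hd K]]; [apply Rdiv_lt_0_compat; lra|].
  exists d. split; auto. intros e He. specialize (K e He). specialize (w_nonneg e (proj1 He)).
  rewrite Rabs_mult. apply (Rle_trans _ (Rabs c * (eta / (Rabs c + 1) * w e))); [now apply Rmult_le_compat_l|].
  replace (Rabs c * (eta / (Rabs c + 1) * w e)) with (eta * w e - eta / (Rabs c + 1) * w e) by (field; lra).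
  assert (0 <= eta / (Rabs c + 1) * w e) by (apply Rmult_le_pos; auto; apply Rlt_le, Rdiv_lt_0_compat; lra).
  lra.
Qed.

Lemma little_o_at_0_mul h : little_o_at_0 (fun _ => 1) h -> little_o_at_0 w (fun e => w e * h e).
Proof.
  intros H eta Heta. destruct (H eta Heta) as [d [Hd K]]. exists d. split; auto.
  intros e He. specialize (K e He). specialize (w_nonneg e (proj1 He)).
  rewrite Rabs_mult, Rabs_right by lra. rewrite Rmult_1_r in K. rewrite Rmult_comm.
  now apply Rmult_le_compat_r.
Qed.

End LittleO.

Lemma little_o_at_0_sq_bound g C d : 0 < d -> (forall e, 0 < e < d -> Rabs (g e) <= C * e ^ 2) ->
  little_o_at_0 (fun e => e) g.
Proof.
  intros Hd H eta Heta. pose proof (Rabs_pos C).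
  exists (Rmin d (eta / (Rabs C + 1))). split; [apply Rmin_pos; auto; apply Rdiv_lt_0_compat; lra|].
  intros e He. pose proof (Rmin_l d (eta / (Rabs C + 1))). pose proof (Rmin_r d (eta / (Rabs C + 1))).
  assert (He1 : e * (Rabs C + 1) <= eta).
  { replace eta with (eta / (Rabs C + 1) * (Rabs C + 1)) by (field; lra). apply Rmult_le_compat_r; lra. }
  pose proof (Rle_abs C). assert (0 <= e ^ 2) by (apply pow_le; lra).
  eapply Rle_trans; [apply H; lra|]. simpl in *. nra.
Qed.

Lemma little_o_at_0_RInt u : cont_nonneg u -> little_o_at_0 (fun e => e) (fun e => RInt u 0 e - e * u 0).
Proof.
  intros Hu eta Heta. destruct (Hu 0 (Rle_refl 0) eta Heta) as [d [Hd H]].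
  exists d. split; auto. intros e He.
  assert (Hex : ex_RInt u 0 e) by (apply cont_nonneg_ex_RInt; auto; lra).
  replace (RInt u 0 e - e * u 0) with (RInt (fun t => u t - u 0) 0 e).
  2:{ rewrite RInt_minus_R, RInt_const_R; [now rewrite Rminus_0_r | exact Hex | apply ex_RInt_const]. }
  replace (eta * e) with ((e - 0) * eta) by ring.
  apply abs_RInt_le_const; [lra | apply (ex_RInt_minus u); auto; apply ex_RInt_const|].
  intros t Ht. apply Rlt_le, H; [lra|]. rewrite Rminus_0_r, Rabs_right; lra.
Qed.

Lemma finite_min_delta n (P : nat -> R -> Prop) :
  (forall k, (k < n)%nat -> exists d, 0 < d /\ forall e, 0 < e < d -> P k e) ->
  exists d, 0 < d /\ forall e, 0 < e < d -> forall k, (k < n)%nat -> P k e.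
Proof.
  induction n; intros H; [exists 1; split; [lra | intros; lia]|].
  destruct IHn as [d1 [Hd1 H1]]; [intros; apply H; lia|].
  destruct (H n) as [d2 [Hd2 H2]]; [lia|].
  exists (Rmin d1 d2). split; [now apply Rmin_pos|]. intros e He k Hk.
  pose proof (Rmin_l d1 d2). pose proof (Rmin_r d1 d2).
  destruct (Nat.eq_dec k n) as [->|]; [apply H2; lra | apply H1; [lra | lia]].
Qed.

Lemma Ptrans_sum_expansion N M i (F : R -> nat -> R) B : (i < N)%nat ->
  (forall e k, 0 < e -> (k < N)%nat -> Rabs (F e k) <= B) ->
  little_o_at_0 (fun e => e)
    (fun e => sumN N (fun k => Ptrans N M e i k * F e k) - F e i - e * sumN N (fun k => F e k * M i k)).
Proof.
  intros Hi HF. destruct (matrix_bounded N M) as [K HK].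
  set (C := exp (INR N * K)). assert (HC : 0 < C) by apply exp_pos.
  apply (little_o_at_0_sq_bound _ (INR N * C * B) 1); [lra|]. intros e He.
  replace (sumN N (fun k => Ptrans N M e i k * F e k) - F e i - e * sumN N (fun k => F e k * M i k))
    with (sumN N (fun k => (Ptrans N M e i k - delta i k - e * M i k) * F e k)).
  2:{ rewrite <- (sumN_delta_l N i (F e)), <- sumN_scal, <- !sumN_minus by auto.
      apply sumN_ext; intros; ring. }
  eapply Rle_trans; [apply sumN_abs|].
  eapply Rle_trans; [apply (sumN_le _ _ (fun _ => e ^ 2 * C * B))|].
  - intros k Hk. rewrite Rabs_mult.
    apply Rmult_le_compat; auto using Rabs_pos; [apply Ptrans_first_order; auto; lra | apply HF; auto; lra].
  - rewrite sumN_const. right; ring.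
Qed.

Lemma RInt_tail_small m B : cont_nonneg m -> (forall t, 0 <= t -> 0 <= m t) ->
  (forall T, 0 <= T -> RInt m 0 T <= B) ->
  forall eta, 0 < eta -> exists T0, 0 <= T0 /\ forall S T, T0 <= S <= T -> RInt m S T <= eta.
Proof.
  intros Hm Hpos HB eta Heta.
  assert (Hex : forall a b, 0 <= a -> a <= b -> ex_RInt m a b) by (intros; now apply cont_nonneg_ex_RInt).
  destruct (bounded_nondecreasing_limit (fun T => RInt m 0 T) B) as [l Hl]; auto.
  { apply RInt_nondecreasing; auto. intros; apply Hex; lra. }
  destruct (Hl (eta / 2)) as [T0 [HT0 HH]]; [lra|].
  exists T0. split; auto. intros S T HST.
  assert (E : RInt m 0 S + RInt m S T = RInt m 0 T) by (apply RInt_Chasles_R; apply Hex; lra).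
  assert (HS := HH S (proj1 HST)). assert (HT := HH T ltac:(lra)).
  apply Rabs_def2 in HS. apply Rabs_def2 in HT. lra.
Qed.

(* Translation is continuous in [L^1]: uniform continuity on a compact [[0, T0 + 1]],
   and the tail beyond [T0] is small for both [g] and its translate. *)
Lemma RInt_translation_small g m B : cont_nonneg g -> cont_nonneg m ->
  (forall t, 0 <= t -> Rabs (g t) <= m t) -> (forall T, 0 <= T -> RInt m 0 T <= B) ->
  forall eta, 0 < eta -> exists d, 0 < d /\ forall e, 0 < e < d -> forall T, 0 <= T ->
    RInt (fun t => Rabs (g (t + e) - g t)) 0 T <= eta.
Proof.
  intros Hg Hm Hgm HB eta Heta.
  assert (Hpos : forall t, 0 <= t -> 0 <= m t)
    by (intros t Ht; eapply Rle_trans; [apply Rabs_pos | now apply Hgm]).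
  assert (Hex : forall a b, 0 <= a -> a <= b -> ex_RInt m a b) by (intros; now apply cont_nonneg_ex_RInt).
  destruct (RInt_tail_small m B Hm Hpos HB (eta / 4)) as [T0 [HT0 Htail]]; [lra|].
  set (c := eta / (4 * (T0 + 1))).
  assert (Hc : 0 < c) by (apply Rdiv_lt_0_compat; lra).
  destruct (Heine (fun t => g (Rmax 0 t)) (fun t => 0 <= t <= T0 + 1) (compact_P3 0 (T0 + 1)))
    with (eps := mkposreal c Hc)
    as [[d0 Hd0] Hunif].
  { intros x _. apply continuity_pt_filterlim. now apply cont_nonneg_continuous. }
  simpl in Hunif.
  exists (Rmin 1 d0). split; [apply Rmin_pos; lra|]. intros e He T HT.
  pose proof (Rmin_l 1 d0). pose proof (Rmin_r 1 d0).
  set (h t := Rabs (g (t + e) - g t)).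
  assert (Hhex : forall a b, 0 <= a -> a <= b -> ex_RInt h a b).
  { intros. apply cont_nonneg_ex_RInt; auto.
    apply cont_nonneg_abs, cont_nonneg_minus; auto. apply cont_nonneg_shift; auto; lra. }
  assert (Hhead : forall T', 0 <= T' <= T0 -> RInt h 0 T' <= eta / 4).
  { intros T' HT'. eapply Rle_trans.
    - rewrite <- (Rabs_right (RInt h 0 T'))
        by (apply Rle_ge, RInt_ge_0; [lra | apply Hhex; lra | intros; apply Rabs_pos]).
      apply (abs_RInt_le_const h 0 T' c); [lra | apply Hhex; lra|].
      intros t Ht. unfold h. rewrite Rabs_Rabsolu.
      specialize (Hunif (t + e) t). rewrite !Rmax_right in Hunif by lra.
      apply Rlt_le, Hunif; try lra. rewrite Rabs_right; lra.
    - rewrite Rminus_0_r. apply (Rle_trans _ ((T0 + 1) * c)); [apply Rmult_le_compat_r; lra|].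
      unfold c. right; field; lra. }
  change (RInt h 0 T <= eta). destruct (Rle_dec T T0); [specialize (Hhead T ltac:(lra)); lra|].
  assert (Hshift := RInt_translate m T0 T e (Hex (T0 + e) (T + e) ltac:(lra) ltac:(lra))).
  assert (RInt h T0 T <= RInt (fun t => m (t + e) + m t) T0 T).
  { apply RInt_le; [lra | apply Hhex; lra | |].
    { apply (ex_RInt_plus (fun t => m (t + e)) m); [apply Hshift | apply Hex; lra]. }
    intros t Ht. unfold h. eapply Rle_trans; [apply Rabs_triang|]. rewrite Rabs_Ropp.
    apply Rplus_le_compat; apply Hgm; lra. }
  rewrite RInt_plus_R, (proj2 Hshift) in H1 by (apply Hshift || (apply Hex; lra)).
  assert (RInt m T0 T <= eta / 4) by (apply Htail; lra).
  specialize (Htail (T0 + e) (T + e) ltac:(lra)). specialize (Hhead T0 ltac:(lra)).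
  rewrite <- (RInt_Chasles_R h 0 T0 T) by (apply Hhex; lra). lra.
Qed.

(** * The switched payoff *)

Lemma expectation_is_RInt_inf N M k (g : nat -> R -> R) m B : is_generator N M -> (k < N)%nat ->
  (forall j, (j < N)%nat -> cont_nonneg (g j)) -> cont_nonneg m ->
  (forall j t, (j < N)%nat -> 0 <= t -> Rabs (g j t) <= m t) -> (forall T, 0 <= T -> RInt m 0 T <= B) ->
  exists l, is_RInt_inf (fun t => sumN N (fun j => Ptrans N M t k j * g j t)) l /\ Rabs l <= B.
Proof.
  intros HM Hk Hg Hm Hgm HB.
  assert (Hc : cont_nonneg (fun t => sumN N (fun j => Ptrans N M t k j * g j t))).
  { apply (cont_nonneg_sumN N (fun j t => Ptrans N M t k j * g j t)). intros j Hj.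
    apply (cont_nonneg_mult (fun t => Ptrans N M t k j)); auto using Ptrans_cont. }
  apply (is_RInt_inf_dominated _ m); auto; try (intros; apply cont_nonneg_ex_RInt; auto; lra).
  intros t Ht. eapply Rle_trans; [apply sumN_abs|].
  eapply Rle_trans; [apply (sumN_le _ _ (fun j => Ptrans N M t k j * m t))|].
  - intros j Hj. rewrite Rabs_mult, Rabs_right by (apply Rle_ge, Ptrans_nonneg; auto).
    apply Rmult_le_compat_l; auto. now apply Ptrans_nonneg.
  - rewrite sumN_scalr, Ptrans_rowsum by (auto; apply HM). lra.
Qed.

Lemma Feps_0 N f M k : Feps N f 0 M k = Fval N f M k.
Proof.
  unfold Feps, Fval. f_equal. apply functional_extensionality. intros t.
  now rewrite Rplus_0_r.
Qed.

Lemma Fswitch_diag N f e M i : Fswitch N f e M M i = Fval N f M i.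
Proof.
  unfold Fswitch, Fval, Pswitch. f_equal. apply functional_extensionality. intros t.
  apply sumN_ext. intros j Hj.
  destruct (Rle_dec t e); auto.
  rewrite <- Ptrans_add by auto. now replace (e + (t - e)) with t by ring.
Qed.

Definition rows (N : nat) (M : nat -> nat -> R) : list (nat * (nat -> R)) :=
  map (fun j => (j, M j)) (seq 0 N).

Lemma maxabs_ge f l t p : In p l -> Rabs (f t (fst p) (snd p)) <= maxabs f l t.
Proof.
  induction l as [|q l IH]; simpl; intros H; [contradiction|].
  destruct H as [->|H]; [apply Rmax_l | eapply Rle_trans; [apply IH; auto | apply Rmax_r]].
Qed.

Lemma cont_nonneg_maxabs f l : (forall p, In p l -> cont_nonneg (fun t => f t (fst p) (snd p))) ->
  cont_nonneg (maxabs f l).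
Proof.
  induction l as [|q l IH]; simpl; intros H; [apply cont_nonneg_const|].
  apply (cont_nonneg_Rmax (fun t => Rabs (f t (fst q) (snd q))) (maxabs f l)); auto using cont_nonneg_abs.
Qed.

Lemma rnorm_list_bounded N (l : list (nat * (nat -> R))) :
  exists c, 0 < c /\ List.Forall (fun p => rnorm N (snd p) <= c) l.
Proof.
  induction l as [|p l [c [Hc Hl]]]; [exists 1; split; [lra | constructor]|].
  exists (Rmax c (rnorm N (snd p))). split; [eapply Rlt_le_trans; [apply Hc | apply Rmax_l]|].
  constructor; [apply Rmax_r|].
  eapply List.Forall_impl; [|apply Hl]. intros q Hq. eapply Rle_trans; [apply Hq | apply Rmax_l].
Qed.

(* Dominate by the maximum of [|f|] over the finitely many rows of the [Ms], whose integral (I) bounds. *)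
Lemma payoff_dominated N D f Ms : condC N D f -> condI N D f -> (forall M, In M Ms -> InQ N D M) ->
  exists m B, cont_nonneg m /\ (forall T, 0 <= T -> RInt m 0 T <= B) /\
    (forall M j t, In M Ms -> (j < N)%nat -> Rabs (f t j (M j)) <= m t).
Proof.
  intros HC HI HMs. set (l := flat_map (rows N) Ms).
  assert (Hl : forall p, In p l -> (fst p < N)%nat /\ D (fst p) (snd p)).
  { intros p Hp. apply in_flat_map in Hp as [M [HM Hp]].
    apply in_map_iff in Hp as [j [<- Hj]]. apply in_seq in Hj. simpl.
    split; [lia | apply HMs; auto; lia]. }
  destruct (rnorm_list_bounded N l) as [c [Hc Hlc]]. destruct (HI c Hc) as [B HB].
  assert (Hm : cont_nonneg (maxabs f l))
    by (apply cont_nonneg_maxabs; intros p Hp; exact (HC _ _ (proj1 (Hl p Hp)) (proj2 (Hl p Hp)))).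
  exists (maxabs f l), B. repeat split; auto.
  - intros T HT. rewrite <- RInt_Defs_eq by (apply cont_nonneg_ex_RInt; auto; lra).
    apply HB; auto. rewrite List.Forall_forall in Hlc |- *. intros p Hp. repeat split; auto; apply Hl; auto.
  - intros M j t HM Hj. apply (maxabs_ge f l t (j, M j)).
    apply in_flat_map. exists M. split; auto. apply in_map_iff. exists j. split; auto. apply in_seq; lia.
Qed.

Definition payoff_rate N (f : R -> nat -> (nat -> R) -> R) M i (t : R) : R :=
  sumN N (fun j => Ptrans N M t i j * f t j (M j)).

Section Switching.
Variables (N : nat) (D : nat -> (nat -> R) -> Prop) (f : R -> nat -> (nat -> R) -> R).
Hypothesis HD : forall i q, (i < N)%nat -> D i q -> InE N i q.
Hypothesis HC : condC N D f.
Variables (Qs : nat -> nat -> R) (m : R -> R) (B : R).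
Hypothesis HQs : InQ N D Qs.
Hypothesis Hm : cont_nonneg m.
Hypothesis HmB : forall T, 0 <= T -> RInt m 0 T <= B.
Hypothesis Hdom : forall j t, (j < N)%nat -> Rabs (f t j (Qs j)) <= m t.

Lemma payoff_cont M j : InQ N D M -> (j < N)%nat -> cont_nonneg (fun t => f t j (M j)).
Proof. intros HM Hj. exact (HC j (M j) Hj (HM j Hj)). Qed.

Lemma Feps_spec e k : 0 <= e -> (k < N)%nat ->
  is_RInt_inf (fun s => sumN N (fun j => Ptrans N Qs s k j * f (s + e) j (Qs j))) (Feps N f e Qs k) /\
  Rabs (Feps N f e Qs k) <= B.
Proof.
  intros He Hk.
  destruct (expectation_is_RInt_inf N Qs k (fun j s => f (s + e) j (Qs j)) (fun s => m (s + e)) B)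
    as [l [Hl HlB]]; auto.
  - eapply InQ_generator; eauto.
  - intros j Hj. apply (cont_nonneg_shift (fun t => f t j (Qs j))); auto using payoff_cont.
  - now apply cont_nonneg_shift.
  - intros T HT. destruct (RInt_translate m 0 T e) as [_ ->]; [apply cont_nonneg_ex_RInt; auto; lra|].
    rewrite Rplus_0_l.
    assert (E : RInt m 0 e + RInt m e (T + e) = RInt m 0 (T + e))
      by (apply RInt_Chasles_R; apply cont_nonneg_ex_RInt; auto; lra).
    assert (0 <= RInt m 0 e).
    { apply RInt_ge_0; [lra | apply cont_nonneg_ex_RInt; auto; lra|].
      intros t _. eapply Rle_trans; [apply Rabs_pos | apply (Hdom k); lia]. }
    specialize (HmB (T + e) ltac:(lra)). lra.
  - unfold Feps. now rewrite (is_RInt_inf_IntInf _ _ Hl).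
Qed.

Lemma Fval_spec k : (k < N)%nat ->
  is_RInt_inf (fun s => sumN N (fun j => Ptrans N Qs s k j * f s j (Qs j))) (Fval N f Qs k).
Proof.
  intros Hk. rewrite <- Feps_0.
  replace (fun s => sumN N (fun j => Ptrans N Qs s k j * f s j (Qs j)))
    with (fun s => sumN N (fun j => Ptrans N Qs s k j * f (s + 0) j (Qs j)))
    by (apply functional_extensionality; intros s; now rewrite Rplus_0_r).
  apply Feps_spec; auto; lra.
Qed.

Lemma payoff_rate_cont M i : InQ N D M -> (i < N)%nat -> cont_nonneg (payoff_rate N f M i).
Proof.
  intros HM Hi. apply (cont_nonneg_sumN N (fun j t => Ptrans N M t i j * f t j (M j))). intros j Hj.
  apply (cont_nonneg_mult (fun t => Ptrans N M t i j)); auto using payoff_cont.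
  apply Ptrans_cont; auto. eapply InQ_generator; eauto.
Qed.

(* Markov property at the switching time [e]. *)
Lemma Fswitch_split M i e : InQ N D M -> (i < N)%nat -> 0 < e ->
  Fswitch N f e M Qs i
  = RInt (payoff_rate N f M i) 0 e + sumN N (fun k => Ptrans N M e i k * Feps N f e Qs k).
Proof.
  intros HM Hi He. unfold Fswitch. apply is_RInt_inf_IntInf.
  apply (is_RInt_inf_split e _ _
           (fun s => sumN N (fun k => Ptrans N M e i k
                                      * sumN N (fun j => Ptrans N Qs s k j * f (s + e) j (Qs j)))));
    auto using payoff_rate_cont.
  - apply is_RInt_inf_sumN. intros k Hk. apply Feps_spec; auto; lra.
  - intros t Ht. unfold Pswitch. destruct (Rle_dec t e); [reflexivity | lra].
  - intros t Ht. unfold Pswitch. destruct (Rle_dec t e); [lra|]. replace (t - e + e) with t by ring.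
    rewrite (sumN_ext N _ (fun j => sumN N (fun k => Ptrans N M e i k * Ptrans N Qs (t - e) k j * f t j (Qs j))))
      by (intros j _; now rewrite <- sumN_scalr).
    rewrite sumN_swap. apply sumN_ext; intros k _. rewrite <- sumN_scal. apply sumN_ext; intros; ring.
Qed.

Lemma Fswitch_expansion M i : InQ N D M -> (i < N)%nat ->
  little_o_at_0 (fun e => e) (fun e => Fswitch N f e M Qs i
    - (Feps N f e Qs i + (f 0 i (M i) + sumN N (fun j => Feps N f e Qs j * M i j)) * e)).
Proof.
  intros HM Hi.
  assert (Hrate0 : payoff_rate N f M i 0 = f 0 i (M i)).
  { unfold payoff_rate. rewrite <- (sumN_delta_l N i (fun j => f 0 j (M j))) by auto.
    apply sumN_ext; intros j Hj. now rewrite Ptrans_0. }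
  apply (little_o_at_0_ext _ (fun e => (RInt (payoff_rate N f M i) 0 e - e * payoff_rate N f M i 0)
    + (sumN N (fun k => Ptrans N M e i k * Feps N f e Qs k) - Feps N f e Qs i
       - e * sumN N (fun k => Feps N f e Qs k * M i k)))).
  - intros e He. rewrite Fswitch_split, Hrate0 by auto. ring.
  - apply little_o_at_0_plus; [apply little_o_at_0_RInt; auto using payoff_rate_cont|].
    apply (Ptrans_sum_expansion N M i (fun e k => Feps N f e Qs k) B Hi).
    intros e k He Hk. apply Feps_spec; auto; lra.
Qed.

Lemma Feps_Fval_RInt_diff_le e k T : 0 <= e -> 0 <= T -> (k < N)%nat ->
  Rabs (RInt (fun s => sumN N (fun j => Ptrans N Qs s k j * f (s + e) j (Qs j))) 0 T
        - RInt (fun s => sumN N (fun j => Ptrans N Qs s k j * f s j (Qs j))) 0 T)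
  <= sumN N (fun j => RInt (fun t => Rabs (f (t + e) j (Qs j) - f t j (Qs j))) 0 T).
Proof.
  intros He HT Hk.
  assert (Hdiff_ex : forall j, (j < N)%nat -> ex_RInt (fun t => Rabs (f (t + e) j (Qs j) - f t j (Qs j))) 0 T).
  { intros j Hj. apply cont_nonneg_ex_RInt; auto; [|lra].
    apply cont_nonneg_abs, cont_nonneg_minus; auto using payoff_cont.
    apply (cont_nonneg_shift (fun t => f t j (Qs j))); [lra | auto using payoff_cont]. }
  destruct (RInt_sumN N _ 0 T Hdiff_ex) as [Hsum_ex <-].
  destruct (Feps_spec e k He Hk) as [[Ex1 _] _]. destruct (Fval_spec k Hk) as [Ex2 _].
  rewrite <- RInt_minus_R by auto.
  eapply Rle_trans; [apply abs_RInt_le; [lra | apply (ex_RInt_minus (V := R_CompleteNormedModule)); auto]|].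
  apply RInt_le; [lra | apply ex_RInt_norm, (ex_RInt_minus (V := R_CompleteNormedModule)); auto | auto |].
  intros t Ht. rewrite <- sumN_minus. eapply Rle_trans; [apply sumN_abs|]. apply sumN_le; intros j Hj.
  rewrite <- Rmult_minus_distr_l, Rabs_mult.
  destruct (Ptrans_bounds N Qs t k j) as [P0 P1]; auto; [eapply InQ_generator; eauto | lra|].
  rewrite (Rabs_right (Ptrans N Qs t k j)) by lra.
  pose proof (Rabs_pos (f (t + e) j (Qs j) - f t j (Qs j))). nra.
Qed.

Lemma Feps_tends_to_Fval k : (k < N)%nat ->
  little_o_at_0 (fun _ => 1) (fun e => Feps N f e Qs k - Fval N f Qs k).
Proof.
  intros Hk eta Heta. pose proof (pos_INR N).
  set (eta' := eta / (INR N + 1)). assert (Heta' : 0 < eta') by (apply Rdiv_lt_0_compat; lra).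
  destruct (finite_min_delta N (fun j e => forall T, 0 <= T ->
              RInt (fun t => Rabs (f (t + e) j (Qs j) - f t j (Qs j))) 0 T <= eta')) as [d [Hd Hsmall]].
  { intros j Hj. exact (RInt_translation_small (fun t => f t j (Qs j)) m B (payoff_cont Qs j HQs Hj) Hm
                          (fun t _ => Hdom j t Hj) HmB eta' Heta'). }
  exists d. split; auto. intros e He. rewrite Rmult_1_r.
  apply (Rle_trans _ (INR N * eta')).
  - apply (is_RInt_inf_dist_le _ _ _ _ _ (proj1 (Feps_spec e k ltac:(lra) Hk)) (Fval_spec k Hk)).
    intros T HT. eapply Rle_trans; [apply Feps_Fval_RInt_diff_le; auto; lra|].
    rewrite <- (Rmult_1_r eta'), <- sumN_const. apply sumN_le; intros j Hj. rewrite Rmult_1_r.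
    apply Hsmall; auto.
  - apply (Rle_trans _ ((INR N + 1) * eta')); [apply Rmult_le_compat_r; lra|].
    unfold eta'. right; field; lra.
Qed.

Lemma Fval_minus_Fswitch_expansion M i : InQ N D M -> (i < N)%nat ->
  little_o_at_0 (fun e => e) (fun e => (Fval N f Qs i - Fswitch N f e M Qs i)
    - (Gamma N f Qs i (Qs i) - Gamma N f Qs i (M i)) * e).
Proof.
  intros HM Hi.
  apply (little_o_at_0_ext _ (fun e =>
      (Fswitch N f e Qs Qs i
         - (Feps N f e Qs i + (f 0 i (Qs i) + sumN N (fun j => Feps N f e Qs j * Qs i j)) * e))
    - (Fswitch N f e M Qs i
         - (Feps N f e Qs i + (f 0 i (M i) + sumN N (fun j => Feps N f e Qs j * M i j)) * e))
    + e * sumN N (fun k => (Qs i k - M i k) * (Feps N f e Qs k - Fval N f Qs k)))).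
  - intros e He. rewrite Fswitch_diag. unfold Gamma.
    assert (E : sumN N (fun k => (Qs i k - M i k) * (Feps N f e Qs k - Fval N f Qs k))
      = sumN N (fun j => Feps N f e Qs j * Qs i j) - sumN N (fun j => Feps N f e Qs j * M i j)
        - sumN N (fun j => Qs i j * Fval N f Qs j) + sumN N (fun j => M i j * Fval N f Qs j))
      by (rewrite <- !sumN_minus, <- sumN_plus; apply sumN_ext; intros; ring).
    rewrite E. ring.
  - apply little_o_at_0_plus; [apply little_o_at_0_minus; apply Fswitch_expansion; auto|].
    apply (little_o_at_0_mul (fun e => e)); [intros; lra|].
    apply little_o_at_0_sumN; [intros; lra|]. intros k Hk.
    apply little_o_at_0_scal; [intros; lra|]. now apply Feps_tends_to_Fval.
Qed.

End Switching.

Theorem mainTheorem1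
  (N : nat) (D : nat -> (nat -> R) -> Prop)
  (HD : forall i q, (i < N)%nat -> D i q -> InE N i q)
  (f : R -> nat -> (nat -> R) -> R)
  (HC : condC N D f) (HI : condI N D f)
  (i : nat) (Hi : (i < N)%nat)
  (Q Qs : nat -> nat -> R) (HQ : InQ N D Q) (HQs : InQ N D Qs) :
  (forall eta, 0 < eta -> exists d, 0 < d /\ forall e, 0 < e < d ->
     Rabs (Fswitch N f e Q Qs i
           - (Feps N f e Qs i
              + (f 0 i (Q i) + sumN N (fun j => Feps N f e Qs j * Q i j)) * e))
     <= eta * e)
  /\
  (condH N D f ->
   forall eta, 0 < eta -> exists d, 0 < d /\ forall e, 0 < e < d ->
     Rabs ((Fval N f Qs i - Fswitch N f e Q Qs i)
           - (Gamma N f Qs i (Qs i) - Gamma N f Qs i (Q i)) * e)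
     <= eta * e).
Proof.
  destruct (payoff_dominated N D f (cons Q (cons Qs nil)) HC HI) as [m [B [Hm [HmB Hdom]]]].
  { intros M [<-|[<-|[]]]; assumption. }
  assert (HdomQs : forall j t, (j < N)%nat -> Rabs (f t j (Qs j)) <= m t)
    by (intros; apply Hdom; simpl; auto).
  split.
  - exact (Fswitch_expansion N D f HD HC Qs m B HQs Hm HmB HdomQs Q i HQ Hi).
  -
    intros _. exact (Fval_minus_Fswitch_expansion N D f HD HC Qs m B HQs Hm HmB HdomQs Q i HQ Hi).
Qed.
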